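(* Let $A$ be a Noetherian ring, $X=\mathrm{Spec}(A)$, $I=(f_1,\dots,f_n)\subseteq A$, $Z=V(I)$, $U=X\setminus Z$, $\widehat{A}$ the $I$-adic completion, $\mathfrak{X}=\mathrm{Spf}(\widehat{A})$ and $\mathfrak{X}^{\mathrm{ad}}=\mathrm{Spa}(\widehat{A},\widehat{A})$. Let $\sigma\colon\mathfrak{X}^{\mathrm{ad}}\to X$ send a continuous valuation $\nu$ to the prime $\{a\in A:\nu(a)=0\}$, let $U_i=D(f_i)$, $W_i=\sigma^{-1}(U_i)$ and $W=\sigma^{-1}(U)$. For a multi-index $\alpha\in\mathbb{Z}_{\ge0}^n$ put $f^{\alpha}=\prod_j f_j^{\alpha_j}$, and for $k\ge 0$ let \[ W_{i,k}=R_{\mathfrak{X}^{\mathrm{ad}}}\Big(\frac{\{f_i\}\cup\{f^{\alpha}\}_{|\alpha|=k,\ \alpha_i=0}}{f_i}\Big). \] Then $W_i=\bigcup_k W_{i,k}$ for each $i$; in particular \[ W=\bigcup_{i\le n}W_i=\bigcup_{i\le n}\bigcup_k W_{i,k}. \]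
   Context: For a finite subset $T\subseteq\widehat{A}$ generating an open ideal and $s\in\widehat{A}$, the rational subset is $R_{\mathfrak{X}^{\mathrm{ad}}}(T/s)=\{\nu\in\mathrm{Spa}(\widehat{A},\widehat{A}):\nu(t)\le\nu(s)\ \forall t\in T,\ \nu(s)\neq0\}$; here $|\alpha|=\sum_j\alpha_j$. The map $\sigma$ is the composite of the adification of $\mathfrak{X}\to X$ with the support morphism $\mathrm{Spa}(A,A)\to\mathrm{Spec}(A)$. *)

From HB Require Import structures.
From mathcomp Require Import all_boot all_order all_algebra.
Set Implicit Arguments. Unset Strict Implicit. Unset Printing Implicit Defensive.
Import GRing.Theory.
Local Open Scope ring_scope.

Definition is_ideal (R : comPzRingType) (P : R -> Prop) : Prop :=
  [/\ P 0, (forall x y, P x -> P y -> P (x + y)) & (forall r x, P x -> P (r * x))].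

Definition in_ideal_gen (R : comPzRingType) (m : nat) (g : 'I_m -> R) (x : R) : Prop :=
  exists c : 'I_m -> R, x = \sum_(j < m) c j * g j.

Definition noetherian (R : comPzRingType) : Prop :=
  forall P : R -> Prop, is_ideal P ->
    exists s : seq R, forall x, P x <-> in_ideal_gen (fun j : 'I_(size s) => s`_j) x.

Inductive in_pow (R : comPzRingType) (J : R -> Prop) : nat -> R -> Prop :=
| in_pow0 x : in_pow J 0 x
| in_powS k a b : J a -> in_pow J k b -> in_pow J k.+1 (a * b)
| in_pow_zero k : in_pow J k 0
| in_pow_add k x y : in_pow J k x -> in_pow J k y -> in_pow J k (x + y).

Definition ideal_of (A : comPzRingType) (n : nat) (f : 'I_n -> A) : A -> Prop :=
  in_ideal_gen f.
Definition ext_ideal (A Ahat : comPzRingType) (iota : {rmorphism A -> Ahat})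
  (n : nat) (f : 'I_n -> A) : Ahat -> Prop :=
  in_ideal_gen (fun j => iota (f j)).

(* iota : A -> Ahat is an I-adic completion of A:
   A/I^k -> Ahat/(I Ahat)^k is bijective for every k, and Ahat is
   separated and complete for the (I Ahat)-adic topology. *)
Definition is_adic_completion (A Ahat : comPzRingType) (iota : {rmorphism A -> Ahat})
  (n : nat) (f : 'I_n -> A) : Prop :=
  let I := ideal_of f in
  let J := ext_ideal iota f in
  [/\ (forall k (y : Ahat), exists x : A, in_pow J k (y - iota x)),
      (forall k (x : A), in_pow J k (iota x) -> in_pow I k x),
      (forall y : Ahat, (forall k, in_pow J k y) -> y = 0) &
      (forall u : nat -> Ahat, (forall k, in_pow J k (u k.+1 - u k)) ->
         exists y, forall k, in_pow J k (y - u k))].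

Record ordAbGroup := OrdAbGroup {
  og_car :> Type;
  og_mul : og_car -> og_car -> og_car;
  og_one : og_car;
  og_inv : og_car -> og_car;
  og_le : og_car -> og_car -> Prop;
  og_mulA : forall a b c, og_mul a (og_mul b c) = og_mul (og_mul a b) c;
  og_mulC : forall a b, og_mul a b = og_mul b a;
  og_mul1 : forall a, og_mul og_one a = a;
  og_mulV : forall a, og_mul (og_inv a) a = og_one;
  og_le_refl : forall a, og_le a a;
  og_le_trans : forall a b c, og_le a b -> og_le b c -> og_le a c;
  og_le_anti : forall a b, og_le a b -> og_le b a -> a = b;
  og_le_total : forall a b, og_le a b \/ og_le b a;
  og_le_mul : forall a b c, og_le a b -> og_le (og_mul a c) (og_mul b c)
}.

(* Gamma u {0}: None plays the role of 0 *)
Definition vle (G : ordAbGroup) (x y : option G) : Prop :=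
  match x, y with
  | None, _ => True
  | Some _, None => False
  | Some a, Some b => og_le a b
  end.
Definition vlt (G : ordAbGroup) (x y : option G) : Prop := vle x y /\ x <> y.
Definition vmul (G : ordAbGroup) (x y : option G) : option G :=
  match x, y with
  | Some a, Some b => Some (og_mul a b)
  | _, _ => None
  end.

Definition is_valuation (R : comPzRingType) (G : ordAbGroup) (v : R -> option G) : Prop :=
  [/\ v 0 = None, v 1 = Some (og_one G),
      (forall a b, v (a * b) = vmul (v a) (v b)) &
      (forall a b, vle (v (a + b)) (v a) \/ vle (v (a + b)) (v b))].

Inductive in_valgroup (R : comPzRingType) (G : ordAbGroup) (v : R -> option G) : G -> Prop :=
| vg_val a g : v a = Some g -> in_valgroup v g
| vg_one : in_valgroup v (og_one G)
| vg_mul g h : in_valgroup v g -> in_valgroup v h -> in_valgroup v (og_mul g h)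
| vg_inv g : in_valgroup v g -> in_valgroup v (og_inv g).

(* Points of Spa(Ahat, Ahat), Ahat with the (I Ahat)-adic topology:
   continuous valuations (for each gamma in Gamma_v, the additive subgroup
   {x | v x < gamma} is open, i.e. contains some (I Ahat)^k) with v <= 1 on Ahat. *)
Definition in_Spa (A Ahat : comPzRingType) (iota : {rmorphism A -> Ahat})
  (n : nat) (f : 'I_n -> A) (G : ordAbGroup) (v : Ahat -> option G) : Prop :=
  [/\ is_valuation v,
      (forall g : G, in_valgroup v g ->
         exists k, forall x, in_pow (ext_ideal iota f) k x -> vlt (v x) (Some g)) &
      (forall x : Ahat, vle (v x) (Some (og_one G)))].

Definition in_rational (R : comPzRingType) (G : ordAbGroup) (v : R -> option G)
  (T : R -> Prop) (s : R) : Prop :=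
  (forall t, T t -> vle (v t) (v s)) /\ v s <> None.

Definition fpow (A : comPzRingType) (n : nat) (f : 'I_n -> A) (alpha : 'I_n -> nat) : A :=
  \prod_(j < n) f j ^+ alpha j.

Definition Wgens (A Ahat : comPzRingType) (iota : {rmorphism A -> Ahat})
  (n : nat) (f : 'I_n -> A) (i : 'I_n) (k : nat) : Ahat -> Prop :=
  fun t => t = iota (f i) \/
    exists alpha : 'I_n -> nat,
      [/\ (\sum_(j < n) alpha j)%N = k, alpha i = 0%N & t = iota (fpow f alpha)].

Definition sigma (A Ahat : comPzRingType) (iota : {rmorphism A -> Ahat})
  (G : ordAbGroup) (v : Ahat -> option G) : A -> Prop :=
  fun a => v (iota a) = None.

Definition inD (A : comPzRingType) (p : A -> Prop) (g : A) : Prop := ~ p g.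
Definition inU (A : comPzRingType) (n : nat) (f : 'I_n -> A) (p : A -> Prop) : Prop :=
  ~ (forall x, ideal_of f x -> p x).

From mathcomp Require Import all_boot all_order all_algebra.
From Stdlib Require Import Classical.
Set Implicit Arguments.
Unset Strict Implicit.
Import GRing.Theory.
Local Open Scope ring_scope.

(* A point v of Spa with v(f_i) <> 0 is continuous, so some power (I Ahat)^k
   lies in {x | v x < v(f_i)}; every monomial f^alpha with |alpha| = k lies in
   that power, which puts v in W_{i,k}.  Conversely v(f_i) <> 0 is part of the
   definition of W_{i,k}.  The support sigma(v) is an ideal, so it misses
   I = (f_1, ..., f_n) exactly when it misses some generator f_i. *)

Section Ideals.
Variable R : comPzRingType.

Lemma ideal_gen_sub (P : R -> Prop) (m : nat) (g : 'I_m -> R) x :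
  is_ideal P -> (forall j, P (g j)) -> in_ideal_gen g x -> P x.
Proof.
case=> P0 PD PM Pg [c ->].
by apply: (big_ind P) => // j _; apply: PM.
Qed.

Lemma in_ideal_gen_gen (m : nat) (g : 'I_m -> R) j : in_ideal_gen g (g j).
Proof.
exists (fun k => (k == j)%:R).
rewrite (bigD1 j) //= eqxx mul1r big1 ?addr0 // => k /negbTE ->.
by rewrite mul0r.
Qed.

Lemma is_ideal_in_ideal_gen (m : nat) (g : 'I_m -> R) : is_ideal (in_ideal_gen g).
Proof.
split.
- by exists (fun=> 0); rewrite big1 // => j _; rewrite mul0r.
- move=> _ _ [c ->] [d ->]; exists (fun j => c j + d j).
  by rewrite -big_split; apply: eq_bigr => j _; rewrite mulrDl.
- move=> r _ [c ->]; exists (fun j => r * c j).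
  by rewrite mulr_sumr; apply: eq_bigr => j _; rewrite mulrA.
Qed.

Variables (J : R -> Prop) (idealJ : is_ideal J).

Lemma in_powMl k r y : in_pow J k y -> in_pow J k (r * y).
Proof.
case: idealJ => _ _ JM.
elim=> {k y} [x | k a b Ja Jb _ | k | k x y _ IHx _ IHy].
- exact: in_pow0.
- by rewrite mulrA; apply: in_powS Jb; apply: JM.
- by rewrite mulr0; apply: in_pow_zero.
- by rewrite mulrDr; apply: in_pow_add.
Qed.

Lemma in_powM k l x y : in_pow J k x -> in_pow J l y -> in_pow J (k + l) (x * y).
Proof.
move=> Jx Jy; elim: Jx => [x0 | k0 a b Ja _ IH | k0 | k0 x0 y0 _ IHx _ IHy].
- by rewrite add0n; apply: in_powMl.
- by rewrite -mulrA addSn; apply: in_powS.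
- by rewrite mul0r; apply: in_pow_zero.
- by rewrite mulrDl; apply: in_pow_add.
Qed.

Lemma in_powX a e : J a -> in_pow J e (a ^+ e).
Proof.
move=> Ja; elim: e => [|e IH]; first exact: in_pow0.
by rewrite exprS; apply: in_powS.
Qed.

Lemma in_pow_fpow (m : nat) (g : 'I_m -> R) (alpha : 'I_m -> nat) :
  (forall j, J (g j)) -> in_pow J (\sum_(j < m) alpha j)%N (fpow g alpha).
Proof.
move=> Jg; apply: (big_ind2 (fun (k : nat) (x : R) => in_pow J k x)).
- exact: in_pow0.
- by move=> k1 k2 x1 x2; apply: in_powM.
- by move=> j _; apply: in_powX.
Qed.

End Ideals.

Lemma rmorph_fpow (A B : comPzRingType) (iota : {rmorphism A -> B})
  (m : nat) (g : 'I_m -> A) (alpha : 'I_m -> nat) :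
  iota (fpow g alpha) = fpow (fun j => iota (g j)) alpha.
Proof. by rewrite /fpow rmorph_prod; apply: eq_bigr => j _; rewrite rmorphXn. Qed.

Lemma is_ideal_preim (A B : comPzRingType) (iota : {rmorphism A -> B})
  (P : B -> Prop) : is_ideal P -> is_ideal (fun a => P (iota a)).
Proof.
case=> P0 PD PM; split=> [|x y Px Py|r x Px].
- by rewrite rmorph0.
- by rewrite rmorphD; apply: PD.
- by rewrite rmorphM; apply: PM.
Qed.

Lemma is_ideal_valuation_kernel (R : comPzRingType) (G : ordAbGroup)
  (v : R -> option G) : is_valuation v -> is_ideal (fun x => v x = None).
Proof.
case=> v0 _ vM vD; split=> [|x y vx vy|r x vx] //.
- by case: (vD x y); rewrite ?vx ?vy; case: (v (x + y)).
- by rewrite vM vx; case: (v r).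
Qed.

Lemma inU_ideal (A : comPzRingType) (n : nat) (f : 'I_n -> A) (p : A -> Prop) :
  is_ideal p -> inU f p <-> exists i, inD p (f i).
Proof.
move=> idealp; split=> [pU | [i pfi] pI]; last by apply/pfi/pI/in_ideal_gen_gen.
apply: NNPP => nofi; apply: pU => x.
by apply: ideal_gen_sub => // j; apply: NNPP => pj; apply: nofi; exists j.
Qed.

Lemma is_ideal_sigma (A Ahat : comPzRingType) (iota : {rmorphism A -> Ahat})
  (G : ordAbGroup) (v : Ahat -> option G) :
  is_valuation v -> is_ideal (sigma iota v).
Proof. by move=> vval; apply: is_ideal_preim (is_ideal_valuation_kernel vval). Qed.

Lemma inD_sigma_rational (A Ahat : comPzRingType) (n : nat) (f : 'I_n -> A)
  (iota : {rmorphism A -> Ahat}) (G : ordAbGroup) (v : Ahat -> option G) (i : 'I_n) :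
  in_Spa iota f v ->
  inD (sigma iota v) (f i) <-> exists k, in_rational v (Wgens iota f i k) (iota (f i)).
Proof.
move=> v_Spa; split=> [vfi | [k [_ //]]].
case vfiE: (v (iota (f i))) vfi => [gam|//] _.
case: v_Spa => _ v_cont _.
have [k small_k] := v_cont gam (vg_val vfiE).
exists k; split=> [t [->|[alpha [alphak _ ->]]]|]; rewrite vfiE //.
  exact: og_le_refl.
have [] // := small_k (iota (fpow f alpha)).
rewrite rmorph_fpow -alphak.
apply: (in_pow_fpow (is_ideal_in_ideal_gen _)) => j.
exact: in_ideal_gen_gen.
Qed.

Theorem proposition5p3 (A Ahat : comPzRingType) (n : nat) (f : 'I_n -> A)
  (iota : {rmorphism A -> Ahat}) :
  noetherian A -> is_adic_completion iota f ->
  forall (G : ordAbGroup) (v : Ahat -> option G), in_Spa iota f v ->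
  (forall i : 'I_n,
     inD (sigma iota v) (f i) <->
     exists k : nat, in_rational v (Wgens iota f i k) (iota (f i))) /\
  (inU f (sigma iota v) <-> exists i : 'I_n, inD (sigma iota v) (f i)) /\
  (inU f (sigma iota v) <->
     exists (i : 'I_n) (k : nat), in_rational v (Wgens iota f i k) (iota (f i))).
Proof.
move=> _ _ G v v_Spa.
have W_i i := inD_sigma_rational i v_Spa.
have [vval _ _] := v_Spa.
have W := inU_ideal f (is_ideal_sigma iota vval).
split=> //; split=> //; rewrite W.
by split=> [[i /W_i [k]] | [i [k]]]; exists i; [exists k | apply/W_i; exists k].
Qed.
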